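(* Let $f:\mathbb{R}^n\to\mathbb{R}$ be a convex, continuously differentiable, locally strongly convex function with locally Lipschitz gradient and $\mathcal{X}^*:=\arg\min f\neq\emptyset$, optimal value $f^*$. Let $x^0$ be such that $\Lambda(x^0):=\{x:f(x)\le f(x^0)\}$ is bounded; let $r:=\max\{\|x\|:x\in\Lambda(x^0)\}$, $\Omega:=\overline{B}(0;5r)$, let $L_\Omega>0$ satisfy $\|\nabla f(x)-\nabla f(y)\|\le L_\Omega\|x-y\|$ on $\Omega$, and $\mu_\Omega:=\inf_{x,y\in\Omega,x\ne y}\frac{\langle\nabla f(y)-\nabla f(x),y-x\rangle}{\|y-x\|^2}$, with $\mu_\Omega<L_\Omega$. Let $(x^k)$ be generated by $x^{k+1}=x^k-\alpha_k\nabla f(x^k)$ with $\alpha_k\in[\bar\alpha,1/L_\Omega]$, $0<\bar\alpha<1/L_\Omega$. Let $\varepsilon>0$, $x^*$ an optimal solution, $q_0:=\frac{2\bar\alpha\mu_\Omega L_\Omega}{\mu_\Omega+L_\Omega}$, $q_1:=\frac{\mu_\Omega^2\bar\alpha^2}{4}$, and for $a,b>0$ let $M(a,b):=\Big\lceil\frac{\log(\varepsilon^{-1})+\log a}{\log(b^{-1})}+1\Big\rceil$. Then: (a) the first index $N_x(\varepsilon)$ with $\|x^k-x^*\|\le\varepsilon$ satisfies $N_x(\varepsilon)\le M(\|x^0-x^*\|,\sqrt{1-q_0})$; (b) the first index $N_f(\varepsilon)$ with $f(x^k)-f^*\le\varepsilon$ satisfies $N_f(\varepsilon)\le M(f(x^0)-f^*,1-q_1)$;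 (c) the first index $N_{\nabla f}(\varepsilon)$ with $\|\nabla f(x^k)\|\le\varepsilon$ satisfies $N_{\nabla f}(\varepsilon)\le M\big(\sqrt{2L_\Omega^2\mu_\Omega^{-1}(f(x^0)-f^* )},\sqrt{1-q_1}\big)$.
   Context: $f$ is locally strongly convex if every $x$ has $\delta_x>0$, $\mu_x>0$ such that $f(y)\ge f(z)+\langle\nabla f(z),y-z\rangle+\frac{\mu_x}{2}\|y-z\|^2$ for all $y,z\in B(x;\delta_x)$. *)

From HB Require Import structures.
From mathcomp Require Import all_boot all_order all_algebra.
From mathcomp Require Import all_classical all_reals all_analysis.
Set Implicit Arguments. Unset Strict Implicit. Unset Printing Implicit Defensive.
Import Order.TTheory GRing.Theory Num.Theory.
Import numFieldNormedType.Exports.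
Local Open Scope classical_set_scope.
Local Open Scope ring_scope.

Section Defs.
Variables (R : realType) (n : nat).
Implicit Types (x y z : 'rV[R]_n) (f : 'rV[R]_n -> R) (g : 'rV[R]_n -> 'rV[R]_n).

Definition dotv x y : R := \sum_(i < n) x ord0 i * y ord0 i.
Definition enorm x : R := Num.sqrt (dotv x x).

Definition is_gradient f g : Prop :=
  forall x, differentiable f x /\ forall v, ('d f x : 'rV[R]_n -> R) v = dotv (g x) v.

Definition convex_fun f : Prop :=
  forall x y (t : R), 0 <= t <= 1 ->
    f (t *: x + (1 - t) *: y) <= t * f x + (1 - t) * f y.

Definition locally_strongly_convex f g : Prop :=
  forall x, exists delta mu : R, 0 < delta /\ 0 < mu /\
    forall y z, enorm (y - x) < delta -> enorm (z - x) < delta ->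
      f y >= f z + dotv (g z) (y - z) + mu / 2 * enorm (y - z) ^+ 2.

Definition locally_lipschitz g : Prop :=
  forall x, exists delta L : R, 0 < delta /\
    forall y z, enorm (y - x) < delta -> enorm (z - x) < delta ->
      enorm (g y - g z) <= L * enorm (y - z).

Definition mu_on g (Omega : set 'rV[R]_n) : R :=
  inf [set q | exists x y, [/\ Omega x, Omega y, x != y &
                 q = dotv (g y - g x) (y - x) / enorm (y - x) ^+ 2]].

Definition Mbound (eps a b : R) : int :=
  Num.ceil ((ln (eps^-1) + ln a) / ln (b^-1) + 1).

Definition first_index (P : nat -> Prop) (N : nat) : Prop :=
  P N /\ forall k, (k < N)%N -> ~ P k.
End Defs.

(* On the ball Omega = B(0, rho), rho >= 3 r, the gradient is L-Lipschitz and mu = mu_Omega is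
   positive: local strong convexity makes the gradient strongly monotone on small balls, compactness
   makes radius and modulus uniform, and subdividing segments extends this to all of Omega. So f is
   mu-strongly convex with L-Lipschitz gradient on Omega, and the gradient of f - mu/2 |.|^2 is
   (L - mu)-cocoercive there, which gives
     |grad f x|^2 + mu L |x - xstar|^2 <= (L + mu) <grad f x, x - xstar>
   on the level set Lambda(x0). By the descent lemma the iterates never leave Lambda(x0), so this
   contracts |x^k - xstar|^2 by 1 - q0; sufficient decrease and the Polyak-Lojasiewicz inequality
   |grad f|^2 >= 2 mu (f - fstar) contract f - fstar by 1 - q1, and
   |grad f x|^2 <= 2 L^2 / mu (f x - fstar) carries this over to the gradient. Finally, b^k a drops
   below eps as soon as k > (log (1/eps) + log a) / log (1/b). *)

From HB Require Import structures.
From mathcomp Require Import all_boot all_order all_algebra.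
From mathcomp Require Import all_classical all_reals all_analysis.
From mathcomp Require Import ring lra.
Import Order.TTheory GRing.Theory Num.Theory.
Import numFieldNormedType.Exports.
Local Open Scope classical_set_scope.
Local Open Scope ring_scope.
Set Implicit Arguments. Unset Strict Implicit. Unset Printing Implicit Defensive.

Section Euclidean.
Variables (R : realType) (n : nat).
Local Notation V := 'rV[R]_n.
Implicit Types (x y z : V) (a : R).

Definition sqnorm x := dotv x x.

Lemma dotvC x y : dotv x y = dotv y x.
Proof. by apply: eq_bigr => i _; rewrite mulrC. Qed.

Lemma dotvDl x y z : dotv (x + y) z = dotv x z + dotv y z.
Proof. by rewrite /dotv -big_split; apply: eq_bigr => i _; rewrite mxE mulrDl. Qed.

Lemma dotvZl a x y : dotv (a *: x) y = a * dotv x y.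
Proof. by rewrite /dotv mulr_sumr; apply: eq_bigr => i _; rewrite mxE mulrA. Qed.

Lemma dotvNl x y : dotv (- x) y = - dotv x y.
Proof. by rewrite -scaleN1r dotvZl mulN1r. Qed.

Lemma dotvBl x y z : dotv (x - y) z = dotv x z - dotv y z.
Proof. by rewrite dotvDl dotvNl. Qed.

Lemma dotv0l y : dotv 0 y = 0.
Proof. by rewrite -(scale0r 0) dotvZl mul0r. Qed.

Lemma dotvDr x y z : dotv x (y + z) = dotv x y + dotv x z.
Proof. by rewrite dotvC dotvDl !(dotvC x). Qed.

Lemma dotvZr a x y : dotv x (a *: y) = a * dotv x y.
Proof. by rewrite dotvC dotvZl dotvC. Qed.

Lemma dotvNr x y : dotv x (- y) = - dotv x y.
Proof. by rewrite dotvC dotvNl dotvC. Qed.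

Lemma dotvBr x y z : dotv x (y - z) = dotv x y - dotv x z.
Proof. by rewrite dotvDr dotvNr. Qed.

Lemma sqnorm_ge0 x : 0 <= sqnorm x.
Proof. by apply: sumr_ge0 => i _; rewrite -expr2 sqr_ge0. Qed.

Lemma sqnorm_eq0 x : (sqnorm x == 0) = (x == 0).
Proof.
apply/idP/eqP => [/eqP x0|->]; last by rewrite /sqnorm dotv0l.
apply/rowP => i; rewrite mxE; apply/eqP; rewrite -sqrf_eq0 expr2; apply/eqP.
by move: x0 => /psumr_eq0P/(_ i isT) -> // j _; rewrite -expr2 sqr_ge0.
Qed.

Lemma sqnorm_gt0 x : (0 < sqnorm x) = (x != 0).
Proof. by rewrite lt_neqAle sqnorm_ge0 andbT eq_sym sqnorm_eq0. Qed.

Lemma sqnormD x y : sqnorm (x + y) = sqnorm x + 2 * dotv x y + sqnorm y.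
Proof. rewrite /sqnorm !dotvDl !dotvDr (dotvC y x); ring. Qed.

Lemma sqnormB x y : sqnorm (x - y) = sqnorm x - 2 * dotv x y + sqnorm y.
Proof. rewrite /sqnorm !dotvBl !dotvBr (dotvC y x); ring. Qed.

Lemma sqnormZ a x : sqnorm (a *: x) = a ^+ 2 * sqnorm x.
Proof. rewrite /sqnorm dotvZl dotvZr; ring. Qed.

Lemma sqnormN x : sqnorm (- x) = sqnorm x.
Proof. by rewrite /sqnorm dotvNl dotvNr opprK. Qed.

Lemma enorm_ge0 x : 0 <= enorm x.
Proof. exact: sqrtr_ge0. Qed.

Lemma enorm_sqr x : enorm x ^+ 2 = sqnorm x.
Proof. by rewrite sqr_sqrtr // sqnorm_ge0. Qed.

Lemma enorm0 : enorm (0 : V) = 0.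
Proof. by rewrite /enorm dotv0l sqrtr0. Qed.

Lemma enorm_gt0 x : (0 < enorm x) = (x != 0).
Proof. by rewrite sqrtr_gt0 -/(sqnorm x) sqnorm_gt0. Qed.

Lemma enormZ a x : enorm (a *: x) = `|a| * enorm x.
Proof. by rewrite /enorm -/(sqnorm _) sqnormZ sqrtrM ?sqr_ge0 // sqrtr_sqr. Qed.

Lemma enormN x : enorm (- x) = enorm x.
Proof. by rewrite /enorm -!/(sqnorm _) sqnormN. Qed.

Lemma enorm_distC x y : enorm (x - y) = enorm (y - x).
Proof. by rewrite -enormN opprB. Qed.

Lemma dotv_le x y : dotv x y <= enorm x * enorm y.
Proof.
have [xy0|xy_gt0] := lerP (dotv x y) 0.
  by rewrite (le_trans xy0) ?mulr_ge0 ?enorm_ge0.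
rewrite -ler_sqr ?nnegrE ?(ltW xy_gt0) ?mulr_ge0 ?enorm_ge0 // exprMn !enorm_sqr.
have [y0|y_gt0] := eqVneq y 0; first by rewrite y0 /sqnorm (dotvC x) !dotv0l expr0n mulr0.
rewrite -sqnorm_gt0 in y_gt0.
have := sqnorm_ge0 (sqnorm y *: x - dotv x y *: y).
have -> : sqnorm (sqnorm y *: x - dotv x y *: y) =
    sqnorm y * (sqnorm x * sqnorm y - dotv x y ^+ 2).
  by rewrite sqnormB !sqnormZ dotvZl dotvZr; ring.
by rewrite pmulr_rge0 // subr_ge0.
Qed.

Lemma enormD x y : enorm (x + y) <= enorm x + enorm y.
Proof.
rewrite -ler_sqr ?nnegrE ?addr_ge0 ?enorm_ge0 // enorm_sqr sqnormD sqrrD !enorm_sqr.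
by have := dotv_le x y; lra.
Qed.

Lemma enormB x y : enorm (x - y) <= enorm x + enorm y.
Proof. by rewrite -(enormN y) enormD. Qed.

Lemma enorm_segment_le rho x y t : enorm x <= rho -> enorm y <= rho -> 0 <= t <= 1 ->
  enorm (x + t *: (y - x)) <= rho.
Proof.
move=> hx hy /andP[t0 t1].
have -> : x + t *: (y - x) = (1 - t) *: x + t *: y by apply/rowP => i; rewrite !mxE; ring.
rewrite (le_trans (enormD _ _)) // !enormZ !ger0_norm ?subr_ge0 //.
have -> : rho = (1 - t) * rho + t * rho by ring.
by rewrite lerD // ler_wpM2l ?subr_ge0.
Qed.

Lemma normr_coord_le x i : `|x ord0 i| <= enorm x.
Proof.
rewrite -sqrtr_sqr ler_sqrt ?sqnorm_ge0 // /sqnorm /dotv (bigD1 i) //= -expr2.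
by rewrite lerDl sumr_ge0 // => j _; rewrite -expr2 sqr_ge0.
Qed.

Lemma enorm_le_coord x e : 0 <= e -> (forall i, `|x ord0 i| <= e) -> enorm x <= n%:R * e.
Proof.
move=> e0 xe; rewrite -ler_sqr ?nnegrE ?enorm_ge0 ?mulr_ge0 // enorm_sqr.
apply: (@le_trans _ _ (\sum_(i < n) e ^+ 2)).
  apply: ler_sum => i _; rewrite -expr2 -real_normK ?num_real //.
  by rewrite ler_sqr ?nnegrE ?normr_ge0.
rewrite sumr_const card_ord exprMn -[e ^+ 2 *+ n]mulr_natl ler_wpM2r ?sqr_ge0 //.
by rewrite -natrX ler_nat; case: n => // k; rewrite expnS leq_pmulr.
Qed.

End Euclidean.

Lemma derive_ge0_le01 (R : realType) (h dh : R -> R) :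
  (forall t : R, is_derive t (1 : R) h (dh t)) -> (forall t, 0 <= t <= 1 -> 0 <= dh t) ->
  h 0 <= h 1.
Proof.
move=> hd dh_ge0.
have hc : {within `[0, 1], continuous h}.
  by apply: derivable_within_continuous => t _; exact: ex_derive.
rewrite -subr_ge0; have [c c01 ->] := MVT_segment ler01 (fun t _ => hd t) hc.
by rewrite subr0 mulr1 dh_ge0 //; move: c01; rewrite in_itv.
Qed.

Lemma subadditive_local_bound (R : realType) (D : R -> R -> R) (c eta : R) : 0 < eta ->
  (forall s t u, D s u <= D s t + D t u) ->
  (forall s t, 0 <= s -> s <= t -> t <= 1 -> t - s < eta -> D s t <= c * (t - s)) ->
  D 0 1 <= c.
Proof.
move=> eta0 tri loc.
set m := (Num.truncn eta^-1).+1.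
have m0 : 0 < m%:R :> R by rewrite ltr0n.
have m_eta : m%:R^-1 < eta.
  by rewrite -[eta]invrK ltf_pV2 ?posrE ?invr_gt0 //; exact: truncnS_gt.
suff /(_ m (leqnn m)) : forall k, (k <= m)%N -> D 0 (k%:R / m%:R) <= c * (k%:R / m%:R).
  by rewrite divff ?mulr1 // lt0r_neq0.
elim=> [|k IH] km.
  by have := loc 0 0 (lexx _) (lexx _) ler01; rewrite !mul0r !subrr mulr0; apply.
have step : k.+1%:R / m%:R - k%:R / m%:R = m%:R^-1 :> R.
  by rewrite -mulrBl -natrB // subSnn mul1r.
apply: le_trans (tri _ (k%:R / m%:R) _) _.
have -> : c * (k.+1%:R / m%:R) =
    c * (k%:R / m%:R) + c * (k.+1%:R / m%:R - k%:R / m%:R) by ring.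
rewrite lerD ?IH ?(ltnW km) // loc ?step ?divr_ge0 //.
- by rewrite ler_pM2r ?invr_gt0 // ler_nat.
- by rewrite ler_pdivrMr // mul1r ler_nat.
Qed.

Lemma geometric_decay (R : realType) (e : nat -> R) (b : R) : 0 <= b ->
  (forall k, e k.+1 <= b * e k) -> forall k, e k <= b ^+ k * e 0%N.
Proof.
move=> b_ge0 step; elim=> [|k IH]; first by rewrite expr0 mul1r.
by rewrite (le_trans (step k)) // exprS -mulrA ler_wpM2l.
Qed.

Lemma sqrt_le_geometric (R : realType) (s a b : R) (k : nat) : 0 <= a -> 0 <= b ->
  s <= b ^+ k * a -> Num.sqrt s <= Num.sqrt b ^+ k * Num.sqrt a.
Proof.
move=> a_ge0 b_ge0 s_le.
have sqrtX m : Num.sqrt (b ^+ m) = Num.sqrt b ^+ m.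
  by elim: m => [|m IH]; rewrite ?expr0 ?sqrtr1 // !exprS sqrtrM ?IH.
by rewrite -sqrtX -sqrtrM ?exprn_ge0 // ler_sqrt // mulr_ge0 ?exprn_ge0.
Qed.

Section GradientAlongLines.
Variables (R : realType) (n : nat) (f : 'rV[R]_n -> R) (g : 'rV[R]_n -> 'rV[R]_n).
Hypothesis fg : is_gradient f g.
Local Notation V := 'rV[R]_n.

Lemma is_derive_line (x v : V) (t : R) :
  is_derive t 1 (fun s => f (x + s *: v)) (dotv (g (x + t *: v)) v).
Proof.
have [df dg] := fg (x + t *: v).
(* the difference quotients at [t] are those of [f] at [x + t *: v] in direction [v] *)
have E : (fun h : R => h^-1 *: (((fun s => f (x + s *: v)) \o shift t) (h *: 1) - f (x + t *: v)))
   = (fun h : R => h^-1 *: ((f \o shift (x + t *: v)) (h *: v) - f (x + t *: v))).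
  apply/funext => h /=; congr (_ *: (f _ - _)).
  by rewrite [h%:A]mulr1 scalerDl addrCA addrA.
have dv : derivable f (x + t *: v) v by exact: diff_derivable.
apply: DeriveDef; first by rewrite /derivable E.
by rewrite /derive E -/(derive f _ v) deriveE // dg.
Qed.

Lemma gradient_eq0_at_min (xm : V) : (forall y, f xm <= f y) -> g xm = 0.
Proof.
move=> xm_min; set v := - g xm.
have d_min : is_derive (0 : R) (1 : R) (fun s => f (xm + s *: v)) 0.
  apply: (@derive1_at_min _ _ (-1) 1 0); rewrite ?in_itv /= ?ltrN10 ?ltr01 //.
  - by move=> t _; have [] := is_derive_line xm v t.
  - by move=> t _; rewrite scale0r addr0.
have := derive_val (is_derive := is_derive_line xm v 0).
rewrite (derive_val (is_derive := d_min)) scale0r addr0 /v dotvNr => /eqP; rewrite eq_sym oppr_eq0.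
by rewrite -/(sqnorm _) sqnorm_eq0 => /eqP.
Qed.

Lemma is_derive_taylor_remainder (x v : V) (c t : R) :
  is_derive t 1 (fun s => f (x + s *: v) - (s * dotv (g x) v + c / 2 * sqnorm v * (s * s)))
    (dotv (g (x + t *: v) - g x) v - c * t * sqnorm v).
Proof.
set A := dotv (g x) v; set K := c / 2 * sqnorm v.
have quad : is_derive t (1 : R) (fun s : R => s * A + K * (s * s)) (A + K * (2 * t)).
  have id_t : is_derive t (1 : R) (@id R) 1 := is_derive_id t 1.
  have cst_t (a : R) : is_derive t (1 : R) (cst a) (0 : R) := is_derive_cst a t 1.
  have := is_deriveD (is_deriveM id_t (cst_t A)) (is_deriveM (cst_t K) (is_deriveM id_t id_t)).
  move/is_derive_eq; apply.
  by rewrite /= !scaler0 !add0r !addr0 /GRing.scale /=; ring.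
apply: is_derive_eq (is_deriveB (is_derive_line x v t) quad) _.
by rewrite dotvBl /A /K; field.
Qed.

Lemma taylor_ge (x v : V) (c : R) :
  (forall t, 0 <= t <= 1 -> c * t * sqnorm v <= dotv (g (x + t *: v) - g x) v) ->
  f x + dotv (g x) v + c / 2 * sqnorm v <= f (x + v).
Proof.
move=> mono.
have := derive_ge0_le01 (is_derive_taylor_remainder x v c)
  (fun t t01 => ltac:(by rewrite subr_ge0 mono)).
by rewrite !scale0r !scale1r addr0; lra.
Qed.

Lemma taylor_le (x v : V) (c : R) :
  (forall t, 0 <= t <= 1 -> dotv (g (x + t *: v) - g x) v <= c * t * sqnorm v) ->
  f (x + v) <= f x + dotv (g x) v + c / 2 * sqnorm v.
Proof.
move=> mono.
have := derive_ge0_le01 (fun t => is_deriveN (is_derive_taylor_remainder x v c t))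
  (fun t t01 => ltac:(by rewrite oppr_ge0 subr_le0 mono)).
rewrite !fctE !scale0r !scale1r addr0; lra.
Qed.

End GradientAlongLines.

Lemma seq_lower_bound_gt0 (R : realType) (T : eqType) (s : seq T) (F : T -> R) :
  (forall p, 0 < F p) -> exists2 m, 0 < m & forall p, p \in s -> m <= F p.
Proof.
move=> F_gt0; elim: s => [|a s [m m_gt0 ms]]; first by exists 1.
exists (Num.min m (F a)); first by rewrite lt_min m_gt0 F_gt0.
by move=> p; rewrite in_cons ge_min => /orP[/eqP ->|/ms ->]; rewrite ?lexx ?orbT.
Qed.

Section StrongMonotonicity.
Variables (R : realType) (n : nat).
Local Notation V := 'rV[R]_n.

Lemma enorm_ball_finite_cover (rho : R) (e : V -> R) : (forall p, 0 < e p) ->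
  exists s : seq V, forall a, enorm a <= rho -> exists2 p, p \in s & enorm (a - p) < e p.
Proof.
(* ['rV_n] carries the sup-norm topology; its balls of radius [e p / n.+1] lie in Euclidean
   balls of radius [e p]. *)
move=> e_gt0; pose e' p := e p / n.+1%:R.
have e'_gt0 p : 0 < e' p by rewrite divr_gt0 ?ltr0n.
have box : compact [set v : V | forall i, `[- rho, rho]%classic (v ord0 i)].
  exact: (@rV_compact R n _ (fun _ => @segment_compact R (- rho) rho)).
rewrite compact_cover in box.
have [p _|v _|D _ cover] := box V setT (fun p => ball p (e' p)); first exact: ball_open.
  by exists v => //; exact: ballxx.
exists (finmap.enum_fset D) => a a_rho.
have [|p pD ap] := cover a.
  by move=> i; rewrite /= in_itv /= -ler_norml (le_trans (normr_coord_le a i)).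
exists p => //; apply: le_lt_trans (enorm_le_coord (ltW (e'_gt0 p)) _) _.
  by move=> i; rewrite !mxE distrC ltW //; case: ap => _ /(_ ord0 i).
by rewrite /e' mulrA ltr_pdivrMr ?ltr0n // mulrC ltr_pM2l ?ltr_nat.
Qed.

Variables (f : V -> R) (g : V -> V).
Hypothesis fg_lsc : locally_strongly_convex f g.

Lemma locally_strongly_monotone (p : V) : exists d c : R, [/\ 0 < d, 0 < c &
  forall y z, enorm (y - p) < d -> enorm (z - p) < d ->
    c * sqnorm (y - z) <= dotv (g y - g z) (y - z)].
Proof.
have [d [c [d_gt0 [c_gt0 cvx]]]] := fg_lsc p.
exists d, c; split=> // y z yp zp.
have := cvx y z yp zp; have := cvx z y zp yp.
rewrite enorm_distC !enorm_sqr -(opprB y z) dotvNr dotvBl; lra.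
Qed.

Lemma strongly_monotone_near_ball (rho : R) : exists d c : R, [/\ 0 < d, 0 < c &
  forall a b, enorm a <= rho -> enorm (b - a) < d ->
    c * sqnorm (b - a) <= dotv (g b - g a) (b - a)].
Proof.
have /choice[dc dc_spec] : forall p, exists dc : R * R, [/\ 0 < dc.1, 0 < dc.2 &
    forall y z, enorm (y - p) < dc.1 -> enorm (z - p) < dc.1 ->
      dc.2 * sqnorm (y - z) <= dotv (g y - g z) (y - z)].
  by move=> p; have [d [c spec]] := locally_strongly_monotone p; exists (d, c).
have d_gt0 p : 0 < (dc p).1 / 2 by have [dp_gt0 _ _] := dc_spec p; rewrite divr_gt0.
have [s cover] := enorm_ball_finite_cover rho d_gt0.
have [d d0 ds] := seq_lower_bound_gt0 s d_gt0.
have c_gt0 p : 0 < (dc p).2 by have [_ cp_gt0 _] := dc_spec p.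
have [c c0 cs] := seq_lower_bound_gt0 s c_gt0.
exists d, c; split=> // a b a_rho ba.
have [p ps ap] := cover a a_rho.
have [dp_gt0 cp_gt0 mono] := dc_spec p.
have bp : enorm (b - p) < (dc p).1.
  have := enormD (b - a) (a - p); rewrite addrA subrK.
  by move/le_lt_trans; apply; have := ds p ps; lra.
apply: le_trans (mono b a bp _); last by lra.
by rewrite ler_wpM2r ?sqnorm_ge0 ?cs.
Qed.

Lemma strongly_monotone_on_ball (rho : R) : exists2 c : R, 0 < c &
  forall x y, enorm x <= rho -> enorm y <= rho ->
    c * sqnorm (y - x) <= dotv (g y - g x) (y - x).
Proof.
have [d [c [d_gt0 c_gt0 mono]]] := strongly_monotone_near_ball rho.
exists c => // x y x_rho y_rho.
set w := enorm (y - x); have w_ge0 : 0 <= w := enorm_ge0 _.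
pose F t := dotv (g (x + t *: (y - x))) (y - x).
have F0 : F 0 = dotv (g x) (y - x) by rewrite /F scale0r addr0.
have F1 : F 1 = dotv (g y) (y - x) by rewrite /F scale1r (addrC x) subrK.
suff : F 0 - F 1 <= - (c * sqnorm (y - x)) by rewrite F0 F1 dotvBl; lra.
apply: (@subadditive_local_bound _ (fun s t => F s - F t) _ (d / (w + 1))).
- by rewrite divr_gt0 //; lra.
- by move=> s t u; lra.
move=> s t s_ge0 st t_le1 ts_d.
have segment : x + t *: (y - x) - (x + s *: (y - x)) = (t - s) *: (y - x).
  by apply/rowP => i; rewrite !mxE; ring.
have a_rho : enorm (x + s *: (y - x)) <= rho.
  by rewrite enorm_segment_le // s_ge0 (le_trans st).
have ba_d : enorm (x + t *: (y - x) - (x + s *: (y - x))) < d.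
  rewrite segment enormZ ger0_norm ?subr_ge0 // -/w.
  by move: ts_d; rewrite ltr_pdivlMr; lra.
have := mono _ _ a_rho ba_d.
rewrite segment sqnormZ dotvZr dotvBl -/(F s) -/(F t) => mono_st.
have [->|ts] := eqVneq t s; first by rewrite !subrr mulr0.
have ts_gt0 : 0 < t - s by rewrite subr_gt0 lt_neqAle eq_sym ts st.
by rewrite -(ler_pM2l ts_gt0); lra.
Qed.

End StrongMonotonicity.

Section MuOn.
Variables (R : realType) (n : nat) (g : 'rV[R]_n -> 'rV[R]_n) (Omega : set 'rV[R]_n).

Lemma mu_on_le (L : R) :
  (forall y z, Omega y -> Omega z -> enorm (g y - g z) <= L * enorm (y - z)) ->
  forall y z, Omega y -> Omega z -> mu_on g Omega * sqnorm (y - z) <= dotv (g y - g z) (y - z).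
Proof.
move=> g_lip y z Oy Oz.
have [->|yz] := eqVneq y z; first by rewrite !subrr /sqnorm dotv0l mulr0.
rewrite -ler_pdivlMr ?sqnorm_gt0 ?subr_eq0 //; apply: ge_inf; last first.
  by exists z, y; rewrite enorm_sqr eq_sym.
(* [inf] is only meaningful on sets bounded below; the Lipschitz bound gives [- L]. *)
exists (- L) => _ [a [b [Oa Ob ab ->]]].
rewrite ler_pdivlMr ?enorm_sqr ?sqnorm_gt0 ?subr_eq0 1?eq_sym // -enorm_sqr mulNr lerNl.
rewrite -dotvNl (le_trans (dotv_le _ _)) // enormN expr2 mulrA ler_wpM2r ?enorm_ge0 //.
exact: g_lip.
Qed.

Lemma mu_on_ge (c : R) : (exists y z, [/\ Omega y, Omega z & y != z]) ->
  (forall y z, Omega y -> Omega z -> c * sqnorm (y - z) <= dotv (g y - g z) (y - z)) ->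
  c <= mu_on g Omega.
Proof.
move=> [y [z [Oy Oz yz]]] mono; apply: lb_le_inf.
  by exists (dotv (g z - g y) (z - y) / enorm (z - y) ^+ 2), y, z.
move=> _ [a [b [Oa Ob ab ->]]].
by rewrite ler_pdivlMr ?enorm_sqr ?sqnorm_gt0 ?subr_eq0 1?eq_sym // mono.
Qed.

End MuOn.

Lemma mu_on_ball_gt0 (R : realType) (n : nat) (f : 'rV[R]_n -> R) (g : 'rV[R]_n -> 'rV[R]_n)
    (rho : R) :
  locally_strongly_convex f g ->
  (exists y z : 'rV[R]_n, [/\ enorm y <= rho, enorm z <= rho & y != z]) ->
  0 < mu_on g [set y | enorm y <= rho].
Proof.
move=> lsc two_points; have [c c_gt0 mono] := strongly_monotone_on_ball lsc rho.
by apply: lt_le_trans c_gt0 (mu_on_ge two_points _) => y z y_rho z_rho; apply: mono.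
Qed.

Section OnBall.
Variables (R : realType) (n : nat) (f : 'rV[R]_n -> R) (g : 'rV[R]_n -> 'rV[R]_n) (rho L : R).
Local Notation V := 'rV[R]_n.
Hypothesis fg : is_gradient f g.
Hypothesis g_lip : forall y z, enorm y <= rho -> enorm z <= rho ->
  enorm (g y - g z) <= L * enorm (y - z).
Local Notation mu := (mu_on g [set y : V | enorm y <= rho]).

Lemma descent_on_ball (x y : V) : enorm x <= rho -> enorm y <= rho ->
  f y <= f x + dotv (g x) (y - x) + L / 2 * sqnorm (y - x).
Proof.
move=> x_rho y_rho; rewrite -[in f y](subrKC x y); apply: (taylor_le fg) => t t01.
have := g_lip (enorm_segment_le x_rho y_rho t01) x_rho.
rewrite [_ + _ - x]addrC addKr enormZ ger0_norm; last by case/andP: t01.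
move=> lip; apply: le_trans (dotv_le _ _) _.
by rewrite -enorm_sqr expr2 mulrA ler_wpM2r ?enorm_ge0 // -mulrA.
Qed.

Lemma strong_convexity_on_ball (x y : V) : enorm x <= rho -> enorm y <= rho ->
  f x + dotv (g x) (y - x) + mu / 2 * sqnorm (y - x) <= f y.
Proof.
move=> x_rho y_rho; rewrite -[in f y](subrKC x y); apply: (taylor_ge fg) => t t01.
have := mu_on_le g_lip (enorm_segment_le x_rho y_rho t01) x_rho.
rewrite [_ + _ - x]addrC addKr sqnormZ dotvZr.
have [->|t_gt0] := eqVneq t 0; first by rewrite scale0r addr0 subrr dotv0l !mulr0 mul0r.
have {}t_gt0 : 0 < t by rewrite lt_neqAle eq_sym t_gt0; case/andP: t01.
by move=> mono; rewrite -(ler_pM2l t_gt0); lra.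
Qed.

Definition fshift (y : V) := f y - mu / 2 * sqnorm y.
Definition gshift (y : V) := g y - mu *: y.

Lemma fshift_ge_tangent (x y : V) : enorm x <= rho -> enorm y <= rho ->
  fshift x + dotv (gshift x) (y - x) <= fshift y.
Proof.
move=> x_rho y_rho; have := strong_convexity_on_ball x_rho y_rho.
rewrite /fshift /gshift sqnormB !dotvBl !dotvBr !dotvZl (dotvC y x) -/(sqnorm x); lra.
Qed.

Lemma fshift_le_tangent (x y : V) : enorm x <= rho -> enorm y <= rho ->
  fshift y <= fshift x + dotv (gshift x) (y - x) + (L - mu) / 2 * sqnorm (y - x).
Proof.
move=> x_rho y_rho; have := descent_on_ball x_rho y_rho.
rewrite /fshift /gshift sqnormB !dotvBl !dotvBr !dotvZl (dotvC y x) -/(sqnorm x); lra.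
Qed.

Lemma gshift_cocoercive (x y : V) (k := (L - mu)^-1) (D := gshift y - gshift x) :
  mu < L -> enorm x <= rho -> enorm y <= rho ->
  enorm (y - k *: D) <= rho -> enorm (x + k *: D) <= rho ->
  sqnorm D <= (L - mu) * dotv D (y - x).
Proof.
move=> mu_lt_L x_rho y_rho z1_rho z2_rho.
have h1 := fshift_ge_tangent x_rho z1_rho; have h2 := fshift_le_tangent y_rho z1_rho.
have h3 := fshift_ge_tangent y_rho z2_rho; have h4 := fshift_le_tangent x_rho z2_rho.
have gy : gshift y = gshift x + D by rewrite addrC subrK.
have e1 : y - k *: D - x = (y - x) - k *: D by apply/rowP => i; rewrite !mxE; ring.
have e2 : y - k *: D - y = - (k *: D) by apply/rowP => i; rewrite !mxE; ring.
have e3 : x + k *: D - y = k *: D - (y - x) by apply/rowP => i; rewrite !mxE; ring.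
have e4 : x + k *: D - x = k *: D by apply/rowP => i; rewrite !mxE; ring.
rewrite e1 in h1; rewrite gy e2 in h2; rewrite gy e3 in h3; rewrite e4 in h4.
have Lmu_gt0 : 0 < L - mu by rewrite subr_gt0.
have Lk : (L - mu) * k = 1 by rewrite mulfV ?lt0r_neq0.
(* keep [D] and [gshift x] opaque, or the bilinearity rewrites would unfold them *)
clearbody k D; move: h1 h2 h3 h4; move: (gshift x) => p h1 h2 h3 h4.
rewrite sqnormN sqnormZ !dotvDl !dotvBr !dotvNr !dotvZr -/(sqnorm D) in h1 h2 h3 h4.
have key : 2 * k * sqnorm D - (L - mu) * k ^+ 2 * sqnorm D <= dotv D (y - x).
  by rewrite dotvBr; lra.
have := ler_wpM2l (ltW Lmu_gt0) key.
have -> : (L - mu) * (2 * k * sqnorm D - (L - mu) * k ^+ 2 * sqnorm D) =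
          (2 * ((L - mu) * k) - ((L - mu) * k) ^+ 2) * sqnorm D by ring.
by rewrite Lk expr1n; lra.
Qed.

End OnBall.

Section LevelSet.
Variables (R : realType) (n : nat) (f : 'rV[R]_n -> R) (g : 'rV[R]_n -> 'rV[R]_n).
Variables (rho L r : R) (x0 xstar : 'rV[R]_n).
Local Notation V := 'rV[R]_n.
Local Notation mu := (mu_on g [set y : V | enorm y <= rho]).
Hypothesis fg : is_gradient f g.
Hypothesis g_lip : forall y z, enorm y <= rho -> enorm z <= rho ->
  enorm (g y - g z) <= L * enorm (y - z).
Hypothesis xstar_min : forall y, f xstar <= f y.
Hypothesis level_bounded : forall y, f y <= f x0 -> enorm y <= r.
Hypothesis r_gt0 : 0 < r.
(* The theorem takes rho = 5 r; every auxiliary point below stays within 3 r. *)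
Hypothesis r_rho : 3 * r <= rho.
Hypothesis mu_gt0 : 0 < mu.
Hypothesis mu_lt_L : mu < L.

Lemma L_gt0 : 0 < L.
Proof. exact: lt_trans mu_lt_L. Qed.

Lemma le_rho (y : V) (c : R) : c <= 3 -> enorm y <= c * r -> enorm y <= rho.
Proof.
by move=> c3 /le_trans; apply; apply: le_trans r_rho; rewrite ler_wpM2r // ltW.
Qed.

Lemma le_r_rho (y : V) : enorm y <= r -> enorm y <= rho.
Proof. by move=> y_r; apply: (@le_rho _ 1); rewrite ?mul1r //; lra. Qed.

Lemma xstar_le_r : enorm xstar <= r.
Proof. exact: level_bounded. Qed.

Lemma g_xstar : g xstar = 0.
Proof. exact: (gradient_eq0_at_min fg xstar_min). Qed.

Local Notation gs := (gshift g rho).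

(* Cocoercivity applies only if the test points [y - k D] and [x + k D] stay in the ball,
   hence the restriction to nearby points, removed below by subdividing segments. *)
Lemma gshift_lipschitz_near (x y : V) : enorm x <= r -> enorm y <= r ->
  enorm (y - x) <= r * (L - mu) / (L + mu) ->
  enorm (gs y - gs x) <= (L - mu) * enorm (y - x).
Proof.
move=> x_r y_r yx_small.
have Lmu_gt0 : 0 < L - mu by rewrite subr_gt0.
have L_mu_gt0 : 0 < L + mu by rewrite addr_gt0 // L_gt0.
set D := gs y - gs x; set k := (L - mu)^-1.
have D_le : enorm D <= r * (L - mu).
  have -> : D = (g y - g x) - mu *: (y - x) by apply/rowP => i; rewrite !mxE; ring.
  rewrite (le_trans (enormB _ _)) // enormZ gtr0_norm //.
  apply: le_trans (_ : _ <= (L + mu) * enorm (y - x)) _.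
    by rewrite mulrDl lerD2r g_lip ?le_r_rho.
  by rewrite mulrC -ler_pdivlMr.
have kD_le : enorm (k *: D) <= r.
  by rewrite enormZ gtr0_norm ?invr_gt0 // mulrC ler_pdivrMr.
have z1 : enorm (y - k *: D) <= rho.
  by apply: (@le_rho _ 2); rewrite ?(le_trans (enormB _ _)); lra.
have z2 : enorm (x + k *: D) <= rho.
  by apply: (@le_rho _ 2); rewrite ?(le_trans (enormD _ _)); lra.
have := gshift_cocoercive fg g_lip mu_lt_L (le_r_rho x_r) (le_r_rho y_r) z1 z2.
rewrite -/D -enorm_sqr expr2 => coco.
have {coco} : enorm D * enorm D <= enorm D * ((L - mu) * enorm (y - x)).
  by rewrite mulrCA (le_trans coco) // ler_wpM2l ?dotv_le // ltW.
have [->|D_gt0] := eqVneq (enorm D) 0; first by rewrite mulr_ge0 ?enorm_ge0 // ltW.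
by rewrite ler_pM2l // lt_neqAle eq_sym D_gt0 enorm_ge0.
Qed.

Lemma gshift_lipschitz (x y : V) : enorm x <= r -> enorm y <= r ->
  enorm (gs y - gs x) <= (L - mu) * enorm (y - x).
Proof.
move=> x_r y_r; set w := enorm (y - x); have w_ge0 : 0 <= w := enorm_ge0 _.
have Lmu_gt0 : 0 < L - mu by rewrite subr_gt0.
have L_mu_gt0 : 0 < L + mu by rewrite addr_gt0 // L_gt0.
set d := r * (L - mu) / (L + mu).
pose G t := gs (x + t *: (y - x)).
have := @subadditive_local_bound _ (fun s t => enorm (G t - G s)) ((L - mu) * w) (d / (w + 1)).
have G0 : G 0 = gs x by rewrite /G scale0r addr0.
have G1 : G 1 = gs y by rewrite /G scale1r subrKC.
rewrite -G0 -G1; apply.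
- by rewrite !divr_gt0 ?mulr_gt0 //; lra.
- move=> s t u; have -> : G u - G s = (G u - G t) + (G t - G s) by rewrite addrA subrK.
  by rewrite [X in _ <= X]addrC enormD.
move=> s t s_ge0 st t_le1 ts_small.
have segment : x + t *: (y - x) - (x + s *: (y - x)) = (t - s) *: (y - x).
  by apply/rowP => i; rewrite !mxE; ring.
have := @gshift_lipschitz_near (x + s *: (y - x)) (x + t *: (y - x)).
rewrite segment enormZ ger0_norm ?subr_ge0 // -/w.
have -> : (L - mu) * w * (t - s) = (L - mu) * ((t - s) * w) by ring.
have s01 : 0 <= s <= 1 by rewrite s_ge0 (le_trans st).
have t01 : 0 <= t <= 1 by rewrite (le_trans s_ge0 st).
apply; rewrite ?enorm_segment_le // -/d.
by move: ts_small; rewrite ltr_pdivlMr; lra.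
Qed.

Lemma coercivity_at_min (x : V) : enorm x <= r ->
  sqnorm (g x) + mu * L * sqnorm (x - xstar) <= (L + mu) * dotv (g x) (x - xstar).
Proof.
move=> x_r; have xs_r := xstar_le_r; have Lmu_gt0 : 0 < L - mu by rewrite subr_gt0.
set D := gs x - gs xstar; set k := (L - mu)^-1.
have kD_le : enorm (k *: D) <= 2 * r.
  rewrite enormZ gtr0_norm ?invr_gt0 // mulrC ler_pdivrMr //.
  apply: le_trans (gshift_lipschitz xstar_le_r x_r) _.
  by rewrite mulrC ler_wpM2r ?(ltW Lmu_gt0) // (le_trans (enormB _ _)) //; lra.
have z1 : enorm (x - k *: D) <= rho.
  by apply: (@le_rho _ 3); rewrite ?(le_trans (enormB _ _)); lra.
have z2 : enorm (xstar + k *: D) <= rho.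
  by apply: (@le_rho _ 3); rewrite ?(le_trans (enormD _ _)) //; lra.
have := gshift_cocoercive fg g_lip mu_lt_L (le_r_rho xstar_le_r) (le_r_rho x_r) z1 z2.
have -> : gs x - gs xstar = g x - mu *: (x - xstar).
  by rewrite /gshift g_xstar; apply/rowP => i; rewrite !mxE; ring.
move: (x - xstar) => d; rewrite sqnormB dotvBl dotvZr dotvZl sqnormZ -/(sqnorm d); lra.
Qed.

Lemma polyak_lojasiewicz (x : V) : enorm x <= r -> 2 * mu * (f x - f xstar) <= sqnorm (g x).
Proof.
move=> x_r; have := strong_convexity_on_ball fg g_lip (le_r_rho x_r) (le_r_rho xstar_le_r).
move: (xstar - x) => w sc.
have := sqnorm_ge0 (g x + mu *: w); rewrite sqnormD dotvZr sqnormZ.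
have : 2 * mu * (f x - f xstar) <= 2 * mu * (- dotv (g x) w - mu / 2 * sqnorm w).
  by rewrite ler_wpM2l ?mulr_ge0 ?(ltW mu_gt0) //; lra.
lra.
Qed.

Lemma sqnorm_gradient_le (x : V) : enorm x <= r ->
  sqnorm (g x) <= 2 * L ^+ 2 / mu * (f x - f xstar).
Proof.
move=> x_r; have := g_lip (le_r_rho x_r) (le_r_rho xstar_le_r).
rewrite g_xstar subr0 -ler_sqr ?nnegrE ?mulr_ge0 ?enorm_ge0 ?(ltW L_gt0) //.
rewrite exprMn !enorm_sqr => grad_le.
have := strong_convexity_on_ball fg g_lip (le_r_rho xstar_le_r) (le_r_rho x_r).
rewrite g_xstar dotv0l addr0 => sc.
rewrite mulrAC ler_pdivlMr //; apply: le_trans (ler_wpM2r (ltW mu_gt0) grad_le) _.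
have : mu * sqnorm (x - xstar) <= 2 * (f x - f xstar) by lra.
move/(ler_wpM2l (sqr_ge0 L)); lra.
Qed.

Section GradientMethod.
Variables (abar : R) (alpha : nat -> R) (xs : nat -> V).
Hypothesis abar_gt0 : 0 < abar.
Hypothesis alpha_bounds : forall k, abar <= alpha k <= L^-1.
Hypothesis xs0 : xs 0%N = x0.
Hypothesis xsS : forall k, xs k.+1 = xs k - alpha k *: g (xs k).

Lemma alpha_gt0 k : 0 < alpha k.
Proof. by have /andP[abar_le _] := alpha_bounds k; exact: lt_le_trans abar_le. Qed.

Lemma alphaL_le1 k : alpha k * L <= 1.
Proof. by have /andP[_ le_invL] := alpha_bounds k; rewrite -ler_pdivlMr ?L_gt0 // div1r. Qed.

Lemma sufficient_decrease k : f (xs k) <= f x0 ->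
  f (xs k.+1) <= f (xs k) - alpha k / 2 * sqnorm (g (xs k)).
Proof.
move=> level_k; have y_r := level_bounded level_k.
have a_gt0 := alpha_gt0 k; have aL := alphaL_le1 k.
set y := xs k in y_r *; set a := alpha k in a_gt0 aL *.
have gy_le : enorm (g y) <= L * (2 * r).
  have := g_lip (le_r_rho y_r) (le_r_rho xstar_le_r); rewrite g_xstar subr0 => /le_trans.
  by apply; rewrite ler_wpM2l ?(ltW L_gt0) ?(le_trans (enormB _ _)) //; have := xstar_le_r; lra.
have step_rho : enorm (y - a *: g y) <= rho.
  apply: (@le_rho _ 3) => //; apply: le_trans (enormB _ _) _; rewrite enormZ gtr0_norm //.
  have : a * enorm (g y) <= a * (L * (2 * r)) by rewrite ler_wpM2l // ltW.
  have : a * (L * (2 * r)) <= 2 * r by rewrite mulrA ler_piMl ?mulr_ge0 // ltW.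
  lra.
have := descent_on_ball fg g_lip (le_r_rho y_r) step_rho.
have -> : y - a *: g y - y = - (a *: g y) by rewrite addrC addKr.
rewrite xsS -/y -/a dotvNr dotvZr sqnormN sqnormZ -/(sqnorm (g y)).
have : 0 <= (1 - a * L) * a * sqnorm (g y) by rewrite !mulr_ge0 ?subr_ge0 ?sqnorm_ge0 ?(ltW a_gt0).
lra.
Qed.

Lemma iterate_in_level k : f (xs k) <= f x0.
Proof.
elim: k => [|k IH]; first by rewrite xs0.
apply: le_trans (sufficient_decrease IH) _; apply: le_trans IH.
by rewrite gerBl mulr_ge0 ?divr_ge0 ?sqnorm_ge0 ?(ltW (alpha_gt0 k)).
Qed.

Local Notation q0 := (2 * abar * mu * L / (mu + L)).
Local Notation q1 := (mu ^+ 2 * abar ^+ 2 / 4).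

Lemma abarL_le1 : abar * L <= 1.
Proof.
by rewrite (le_trans _ (alphaL_le1 0)) // ler_wpM2r ?(ltW L_gt0) //; case/andP: (alpha_bounds 0).
Qed.

Lemma one_sub_q0_gt0_lt1 : 0 < 1 - q0 < 1.
Proof.
have muL_gt0 : 0 < mu + L by rewrite addr_gt0 // L_gt0.
rewrite subr_gt0 gtrBl divr_gt0 ?mulr_gt0 ?L_gt0 // andbT ltr_pdivrMr // mul1r.
have : mu * (abar * L) <= mu * 1 by rewrite ler_wpM2l ?abarL_le1 // ltW.
have : 2 * mu < mu + L by rewrite mulr_natl mulr2n ltrD2l.
lra.
Qed.

Lemma one_sub_q1_gt0_lt1 : 0 < 1 - q1 < 1.
Proof.
have mu_abar : mu * abar < 1.
  by apply: lt_le_trans abarL_le1; rewrite mulrC ltr_pM2l.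
have sq : (mu * abar) ^+ 2 < 1 by rewrite expr_lt1 // mulr_ge0 // ltW.
by rewrite subr_gt0 gtrBl divr_gt0 ?mulr_gt0 ?exprn_gt0 // andbT ltr_pdivrMr // -exprMn; lra.
Qed.

Lemma dist_contraction k : sqnorm (xs k.+1 - xstar) <= (1 - q0) * sqnorm (xs k - xstar).
Proof.
have := coercivity_at_min (level_bounded (iterate_in_level k)).
have -> : xs k.+1 - xstar = (xs k - xstar) - alpha k *: g (xs k).
  by rewrite xsS; apply/rowP => i; rewrite !mxE; ring.
have a_gt0 := alpha_gt0 k; have aL := alphaL_le1 k.
have /andP[abar_a _] := alpha_bounds k.
move: (xs k - xstar) (g (xs k)) (alpha k) a_gt0 aL abar_a => d G a a_gt0 aL abar_a coer.
have muL_gt0 : 0 < mu + L by rewrite addr_gt0 // L_gt0.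
rewrite -(ler_pM2l muL_gt0).
have -> : (mu + L) * ((1 - q0) * sqnorm d) = (mu + L - 2 * abar * mu * L) * sqnorm d.
  by field; rewrite lt0r_neq0.
rewrite sqnormB dotvZr sqnormZ (dotvC d G).
have coer_a : 0 <= a * ((L + mu) * dotv G d - sqnorm G - mu * L * sqnorm d).
  by rewrite mulr_ge0 ?(ltW a_gt0) //; lra.
have G_coef_ge0 : 0 <= a * (2 - a * (L + mu)) * sqnorm G.
  have : a * mu <= a * L by rewrite ler_wpM2l ?(ltW a_gt0) // ltW.
  by move=> amu; rewrite !mulr_ge0 ?sqnorm_ge0 ?(ltW a_gt0) // subr_ge0; lra.
have abar_le_a : 0 <= (a - abar) * (mu * L * sqnorm d).
  by rewrite !mulr_ge0 ?subr_ge0 ?sqnorm_ge0 ?(ltW mu_gt0) ?(ltW L_gt0).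
(* the claim is 2 coer_a + G_coef_ge0 + 2 abar_le_a *)
lra.
Qed.

Lemma gap_contraction k : f (xs k.+1) - f xstar <= (1 - q1) * (f (xs k) - f xstar).
Proof.
have decrease := sufficient_decrease (iterate_in_level k).
have pl := polyak_lojasiewicz (level_bounded (iterate_in_level k)).
have gap_ge0 : 0 <= f (xs k) - f xstar by rewrite subr_ge0.
have a_gt0 := alpha_gt0 k; have /andP[abar_a _] := alpha_bounds k.
move: (sqnorm (g (xs k))) (alpha k) a_gt0 abar_a decrease pl => QG a a_gt0 abar_a decrease pl.
have mu_abar : mu * abar <= 1.
  by apply: le_trans _ abarL_le1; rewrite mulrC ler_wpM2l ?(ltW abar_gt0) // ltW.
have pl_a : 0 <= a * (QG - 2 * mu * (f (xs k) - f xstar)) by rewrite mulr_ge0 ?subr_ge0 // ltW.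
have q1_le_a_mu : 0 <= (f (xs k) - f xstar) * (a * mu - q1).
  rewrite mulr_ge0 // subr_ge0 -exprMn.
  have mu_abar_ge0 : 0 <= mu * abar by rewrite mulr_ge0 ?(ltW mu_gt0) ?(ltW abar_gt0).
  have : (mu * abar) ^+ 2 <= mu * abar by rewrite expr2 ler_piMl.
  have : abar * mu <= a * mu by rewrite ler_wpM2r ?(ltW mu_gt0).
  lra.
(* the claim is decrease + pl_a / 2 + q1_le_a_mu *)
lra.
Qed.

Lemma dist_rate k : enorm (xs k - xstar) <= Num.sqrt (1 - q0) ^+ k * enorm (x0 - xstar).
Proof.
have /andP[/ltW q0_le1 _] := one_sub_q0_gt0_lt1.
have := geometric_decay (e := fun k => sqnorm (xs k - xstar)) q0_le1 dist_contraction k.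
by rewrite xs0 => /sqrt_le_geometric; apply; rewrite ?sqnorm_ge0.
Qed.

Lemma gap_rate k : f (xs k) - f xstar <= (1 - q1) ^+ k * (f x0 - f xstar).
Proof.
have /andP[/ltW q1_le1 _] := one_sub_q1_gt0_lt1.
have := geometric_decay (e := fun k => f (xs k) - f xstar) q1_le1 gap_contraction k.
by rewrite xs0.
Qed.

Lemma gradient_rate k : enorm (g (xs k)) <=
  Num.sqrt (1 - q1) ^+ k * Num.sqrt (2 * L ^+ 2 / mu * (f x0 - f xstar)).
Proof.
have /andP[/ltW q1_le1 _] := one_sub_q1_gt0_lt1.
have C_ge0 : 0 <= 2 * L ^+ 2 / mu by rewrite divr_ge0 ?(ltW mu_gt0) // mulr_ge0 // sqr_ge0.
apply: sqrt_le_geometric => //; first by rewrite mulr_ge0 // subr_ge0.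
apply: le_trans (sqnorm_gradient_le (level_bounded (iterate_in_level k))) _.
by rewrite [X in _ <= X]mulrCA ler_wpM2l // gap_rate.
Qed.

End GradientMethod.

End LevelSet.

Lemma sqrtr_gt0_lt1 (R : realType) (b : R) : 0 < b < 1 -> 0 < Num.sqrt b < 1.
Proof. by case/andP=> b_gt0 b_lt1; rewrite sqrtr_gt0 b_gt0 -sqrtr1 ltr_sqrt. Qed.

Lemma geometric_lt (R : realType) (a b eps : R) (k : nat) : 0 < eps -> 0 < a -> 0 < b < 1 ->
  (ln (eps^-1) + ln a) / ln (b^-1) < k%:R -> b ^+ k * a < eps.
Proof.
move=> eps_gt0 a_gt0 /andP[b_gt0 b_lt1] Xk.
have lnb_gt0 : 0 < ln (b^-1) by rewrite lnV ?posrE // oppr_gt0 ln_lt0 // b_gt0.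
rewrite -ltr_ln ?posrE ?mulr_gt0 ?exprn_gt0 // lnM ?posrE ?exprn_gt0 // lnXn //.
by move: Xk; rewrite ltr_pdivrMr // !lnV ?posrE // -mulr_natl; lra.
Qed.

Lemma first_index_Mbound (R : realType) (e : nat -> R) (a b eps : R) :
  0 < eps -> 0 <= a -> 0 < b < 1 -> (forall k, e k <= b ^+ k * a) ->
  exists N, first_index (fun k => e k <= eps) N /\ (N = 0%N \/ (N%:Z <= Mbound eps a b)%R).
Proof.
move=> eps_gt0 a_ge0 b01 e_le; set X := (ln (eps^-1) + ln a) / ln (b^-1).
have ex_k : exists k, e k <= eps.
  have [a0|a_neq0] := eqVneq a 0.
    by exists 0%N; rewrite (le_trans (e_le 0%N)) // a0 mulr0 ltW.
  exists (Num.truncn X).+1; rewrite (le_trans (e_le _)) // ltW // geometric_lt //.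
    by rewrite lt_neqAle eq_sym a_neq0.
  exact: truncnS_gt.
have [N eN N_min] := ex_minnP ex_k.
exists N; split.
  by split=> // j jN ej; have := N_min j ej; rewrite leqNgt jN.
case: N eN N_min => [|M] _ M_min; [by left | right].
have eps_lt : eps < b ^+ M * a.
  by apply: lt_le_trans (e_le M); rewrite ltNge; apply/negP => /M_min; rewrite ltnn.
have a_gt0 : 0 < a.
  by rewrite lt_neqAle a_ge0 andbT eq_sym; apply: contraTneq eps_lt => ->; rewrite mulr0 -leNgt ltW.
have MX : M%:R <= X by rewrite leNgt; apply/negP => /(geometric_lt eps_gt0 a_gt0 b01); lra.
rewrite -(ler_int R) (le_trans _ (Num.Theory.ceil_ge (X + 1))) //.
by rewrite -pmulrn -addn1 natrD; lra.
Qed.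

Theorem theorem3p18 (R : realType) (n : nat)
  (f : 'rV[R]_n -> R) (g : 'rV[R]_n -> 'rV[R]_n)
  (x0 xstar : 'rV[R]_n) (r LO abar eps : R)
  (x : nat -> 'rV[R]_n) (alpha : nat -> R) :
  is_gradient f g ->
  convex_fun f ->
  continuous g ->
  locally_strongly_convex f g ->
  locally_lipschitz g ->
  (* x* is an optimal solution (hence argmin f is nonempty), f* = f x* *)
  (forall y, f xstar <= f y) ->
  (* Lambda(x0) is bounded and r is the max of ||x|| over Lambda(x0) *)
  (exists B : R, forall y, f y <= f x0 -> enorm y <= B) ->
  (exists y, f y <= f x0 /\ enorm y = r) ->
  (forall y, f y <= f x0 -> enorm y <= r) ->
  (* L_Omega on Omega = closed ball B(0; 5r) *)
  0 < LO ->
  (forall y z, enorm y <= 5 * r -> enorm z <= 5 * r ->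
     enorm (g y - g z) <= LO * enorm (y - z)) ->
  mu_on g [set y | enorm y <= 5 * r] < LO ->
  (* gradient method *)
  0 < abar -> abar < LO^-1 ->
  (forall k, abar <= alpha k <= LO^-1) ->
  x 0%N = x0 ->
  (forall k, x k.+1 = x k - alpha k *: g (x k)) ->
  0 < eps ->
  let muO := mu_on g [set y | enorm y <= 5 * r] in
  let fstar := f xstar in
  let q0 := 2 * abar * muO * LO / (muO + LO) in
  let q1 := muO ^+ 2 * abar ^+ 2 / 4 in
  (* (a) *)
  (exists N, first_index (fun k => enorm (x k - xstar) <= eps) N /\
     (N = 0%N \/ (N%:Z <= Mbound eps (enorm (x0 - xstar)) (Num.sqrt (1 - q0)))%R)) /\
  (* (b) *)
  (exists N, first_index (fun k => f (x k) - fstar <= eps) N /\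
     (N = 0%N \/ (N%:Z <= Mbound eps (f x0 - fstar) (1 - q1))%R)) /\
  (* (c) *)
  (exists N, first_index (fun k => enorm (g (x k)) <= eps) N /\
     (N = 0%N \/ (N%:Z <= Mbound eps
        (Num.sqrt (2 * LO ^+ 2 / muO * (f x0 - fstar))) (Num.sqrt (1 - q1)))%R)).
Proof.
move=> fg _ _ lsc _ xstar_min _ _ level_bounded _ g_lip mu_lt_L abar_gt0 _ alpha_bounds
  xs0 xsS eps_gt0 muO fstar q0 q1.
have [x0E|x0_neq] := eqVneq x0 xstar.
  have g0 := gradient_eq0_at_min fg xstar_min.
  split; [|split]; exists 0%N; (split; [split=> // | by left]);
    rewrite xs0 x0E /fstar ?g0 ?subrr ?enorm0; exact: ltW.
have x0_r := level_bounded x0 (lexx _); have xstar_r := level_bounded xstar (xstar_min x0).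
have r_gt0 : 0 < r.
  have : 0 < enorm (x0 - xstar) by rewrite enorm_gt0 subr_eq0.
  by have := enormB x0 xstar; lra.
have r_rho : 3 * r <= 5 * r by lra.
have mu_gt0 : 0 < muO.
  have le5 y : enorm y <= r -> enorm y <= 5 * r by lra.
  by apply: mu_on_ball_gt0 lsc _; exists x0, xstar; split; try apply: le5.
have q0_01 := one_sub_q0_gt0_lt1 mu_gt0 mu_lt_L abar_gt0 alpha_bounds.
have q1_01 := one_sub_q1_gt0_lt1 mu_gt0 mu_lt_L abar_gt0 alpha_bounds.
split; [|split].
- exact: (first_index_Mbound eps_gt0 (enorm_ge0 _) (sqrtr_gt0_lt1 q0_01) (dist_rate fg g_lip
    xstar_min level_bounded r_gt0 r_rho mu_gt0 mu_lt_L abar_gt0 alpha_bounds xs0 xsS)).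
- apply: (first_index_Mbound eps_gt0 _ q1_01 (gap_rate fg g_lip xstar_min
    level_bounded r_gt0 r_rho mu_gt0 mu_lt_L abar_gt0 alpha_bounds xs0 xsS)).
  by rewrite subr_ge0 xstar_min.
- exact: (first_index_Mbound eps_gt0 (sqrtr_ge0 _) (sqrtr_gt0_lt1 q1_01) (gradient_rate fg g_lip
    xstar_min level_bounded r_gt0 r_rho mu_gt0 mu_lt_L abar_gt0 alpha_bounds xs0 xsS)).
Qed.
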